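(* Let $m\ge 4$ and let $b_{\lfloor\log m\rfloor}b_{\lfloor\log m\rfloor-1}\cdots b_1b_0$ be the binary representation of $m$, so $b_{\lfloor\log m\rfloor}=1$. On input $a^m$, $\mathsf{RePair}$ produces the rules $X_1\to aa$, $X_i\to X_{i-1}X_{i-1}$ for $2\le i\le\lfloor\log m\rfloor-1$, and the start rule $$S\to X_{\lfloor\log m\rfloor-1}X_{\lfloor\log m\rfloor-1}f_{\lfloor\log m\rfloor-1}(b_{\lfloor\log m\rfloor-1})\cdots f_1(b_1)f_0(b_0).$$ Here $f_0(1)=a$, $f_0(0)=\varepsilon$, and for $i\ge1$, $f_i(1)=X_i$, $f_i(0)=\varepsilon$. In particular, each $X_i$ derives $a^{2^i}$.
   Context: All logarithms are to base 2. A straight-line program (SLP) is a context-free grammar $\mathbb A=(N,\Sigma,P,S)$ with exactly one production $A\to w$, $w\in(N\cup\Sigma)^+$, per nonterminal $A$, and an acyclic ''occurs-in-right-hand-side'' relation; it derives a single word. For an SLP, a word $\gamma$ over $N\cup\Sigma$ is a maximal string if $|\gamma|\ge2$, $\gamma$ occurs at least twice without overlap in the right-hand sides, and no strictly longer word occurs at least as many times without overlap in the right-hand sides. $\mathsf{RePair}$ on input $w$ starts with the single rule $S\to w$. In each round it selects a maximal string $\gamma$ with the largest number of non-overlapping occurrences, replaces a largest set of pairwise non-overlapping occurrences of $\gamma$ (chosen from left to right) in the right-hand sides by a fresh nonterminal $X$, and adds $X\to\gamma$. It stops when no maximal string exists. *)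

From HB Require Import structures.
From mathcomp Require Import all_boot.
Set Implicit Arguments. Unset Strict Implicit. Unset Printing Implicit Defensive.

Inductive sym := Ter of nat | Non of nat.

Definition sym_enc (s : sym) : nat + nat :=
  match s with Ter t => inl t | Non x => inr x end.
Definition sym_dec (s : nat + nat) : sym :=
  match s with inl t => Ter t | inr x => Non x end.
Lemma sym_encK : cancel sym_enc sym_dec. Proof. by case. Qed.
HB.instance Definition _ := Equality.copy sym (can_type sym_encK).

(* A grammar produced by RePair: a list of rules (lhs nonterminal, rhs).
   The start nonterminal is 0. *)
Definition rule := (nat * seq sym)%type.
Definition grammar := seq rule.

(* Number of pairwise non-overlapping occurrences of gam in w, chosen
   greedily from left to right (this is the maximum number).  The fuel
   argument n is taken to be size w. *)
Fixpoint cnt_f (n : nat) (gam w : seq sym) : nat :=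
  match n with
  | 0 => 0
  | n'.+1 =>
    match w with
    | [::] => 0
    | _ :: w' =>
      if (gam != [::]) && prefix gam w
      then (cnt_f n' gam (drop (size gam) w)).+1
      else cnt_f n' gam w'
    end
  end.
Definition cnt (gam w : seq sym) : nat := cnt_f (size w) gam w.

Fixpoint repl_f (n : nat) (gam : seq sym) (X : nat) (w : seq sym) : seq sym :=
  match n with
  | 0 => w
  | n'.+1 =>
    match w with
    | [::] => [::]
    | s :: w' =>
      if (gam != [::]) && prefix gam w
      then Non X :: repl_f n' gam X (drop (size gam) w)
      else s :: repl_f n' gam X w'
    end
  end.
Definition repl (gam : seq sym) (X : nat) (w : seq sym) : seq sym :=
  repl_f (size w) gam X w.

Definition occ (g : grammar) (gam : seq sym) : nat :=
  sumn [seq cnt gam r.2 | r <- g].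

Definition maximal (g : grammar) (gam : seq sym) : Prop :=
  [/\ 2 <= size gam, 2 <= occ g gam &
      forall gam' : seq sym, size gam < size gam' -> occ g gam' < occ g gam].

(* One round of RePair (nondeterministic in the tie-breaking and in the
   choice of the fresh nonterminal name). *)
Definition repair_step (g g' : grammar) : Prop :=
  exists (gam : seq sym) (X : nat),
    [/\ maximal g gam,
        (forall gam', maximal g gam' -> occ g gam' <= occ g gam),
        X != 0, X \notin [seq r.1 | r <- g] &
        g' = [seq (r.1, repl gam X r.2) | r <- g] ++ [:: (X, gam)]].

Inductive repair_reach : grammar -> grammar -> Prop :=
| rr_refl g : repair_reach g g
| rr_step g g' g'' : repair_step g g' -> repair_reach g' g'' -> repair_reach g g''.

Definition repair_output (w : seq nat) (g : grammar) : Prop :=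
  repair_reach [:: (0, map Ter w)] g /\ ~ (exists gam, maximal g gam).

Fixpoint expand (g : grammar) (n : nat) (s : sym) : seq nat :=
  match s with
  | Ter t => [:: t]
  | Non x =>
    match n with
    | 0 => [::]
    | n'.+1 =>
      match [seq r.2 | r <- g & r.1 == x] with
      | rhs :: _ => flatten [seq expand g n' s' | s' <- rhs]
      | [::] => [::]
      end
    end
  end.

Definition fbit (a : nat) (X : nat -> nat) (i : nat) (b : bool) : seq sym :=
  if b then (if i == 0 then [:: Ter a] else [:: Non (X i)]) else [::].

Definition bit (m i : nat) : bool := odd (m %/ 2 ^ i).

Definition start_rhs (a m : nat) (X : nat -> nat) : seq sym :=
  let L := trunc_log 2 m in
  [:: Non (X L.-1); Non (X L.-1)] ++
  flatten [seq fbit a X i (bit m i) | i <- rev (iota 0 L)].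

Definition expected_grammar (a m : nat) (X : nat -> nat) : grammar :=
  let L := trunc_log 2 m in
  (0, start_rhs a m X) :: (X 1, [:: Ter a; Ter a]) ::
  [seq (X i, [:: Non (X i.-1); Non (X i.-1)]) | i <- iota 2 (L - 2)].

From mathcomp Require Import all_boot.
From mathcomp Require Import zify.

(* After k rounds, with q := m / 2^k, RePair has produced the rules
   X_i -> Y_(i-1) Y_(i-1) (1 <= i <= k, where Y_0 = a and Y_i = X_i) and the
   start rule Y_k^q followed by the Y_i with i < k and b_i = 1.  Every symbol
   other than Y_k occurs at most once in the start rule and the rule
   right-hand sides are pairwise distinct, so the only strings occurring at
   least twice are the powers Y_k^j, with q / j non-overlapping occurrences.
   If q >= 4 then Y_k Y_k is a maximal string and beats every other one, so
   the next round introduces X_(k+1) -> Y_k Y_k and reaches stage k + 1.  If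
   q < 4, i.e. k = floor(log m) - 1, there is no maximal string any more,
   and q = 2 + b_k yields the start rule of the statement. *)

Set Implicit Arguments.
Unset Strict Implicit.
Unset Printing Implicit Defensive.

Lemma size_drop_cons (gam w : seq sym) s :
  gam != [::] -> size (drop (size gam) (s :: w)) <= size w.
Proof. by case: gam => //= x g _; rewrite size_drop /= leq_subr. Qed.

Lemma cnt_f_fuel gam n n' w :
  size w <= n -> size w <= n' -> cnt_f n gam w = cnt_f n' gam w.
Proof.
elim: n n' w => [|n IH] [|n'] [|s w] //= le_n le_n'.
case: ifP => [/andP [gam0 _]|_]; last by rewrite (IH n').
have le_drop := size_drop_cons w s gam0.
by rewrite (IH n') //; apply: leq_trans le_drop _.
Qed.

Lemma repl_f_fuel gam X n n' w :
  size w <= n -> size w <= n' -> repl_f n gam X w = repl_f n' gam X w.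
Proof.
elim: n n' w => [|n IH] [|n'] [|s w] //= le_n le_n'.
case: ifP => [/andP [gam0 _]|_]; last by rewrite (IH n').
have le_drop := size_drop_cons w s gam0.
by rewrite (IH n') //; apply: leq_trans le_drop _.
Qed.

Lemma cnt_cons gam s w : cnt gam (s :: w) =
  if (gam != [::]) && prefix gam (s :: w)
  then (cnt gam (drop (size gam) (s :: w))).+1 else cnt gam w.
Proof.
rewrite /cnt /=; case: ifP => [/andP [gam0 _]|//].
by rewrite (cnt_f_fuel _ (size_drop_cons w s gam0) (leqnn _)).
Qed.

Lemma repl_cons gam X s w : repl gam X (s :: w) =
  if (gam != [::]) && prefix gam (s :: w)
  then Non X :: repl gam X (drop (size gam) (s :: w)) else s :: repl gam X w.
Proof.
rewrite /repl /=; case: ifP => [/andP [gam0 _]|//].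
by rewrite (repl_f_fuel _ _ (size_drop_cons w s gam0) (leqnn _)).
Qed.

Lemma cnt_mul_count_le gam s w : cnt gam w * count_mem s gam <= count_mem s w.
Proof.
elim: {w}(size w) {-2}w (leqnn (size w)) => [|n IH] [|x w] // le_wn.
rewrite cnt_cons; case: ifP => [/andP [gam0 /prefixP [w' def_w]]|_].
  have := size_drop_cons w x gam0.
  rewrite def_w drop_size_cat // count_cat mulSn leq_add2l => le_w'.
  by apply: IH; apply: leq_trans le_w' le_wn.
by apply: leq_trans (IH _ le_wn) _; rewrite /= leq_addl.
Qed.

Lemma cnt_gt0_count_le gam w :
  0 < cnt gam w -> forall s, count_mem s gam <= count_mem s w.
Proof.
move=> cnt_gt0 s; apply: leq_trans (cnt_mul_count_le gam s w).
by rewrite -{1}(mul1n (count_mem s gam)) leq_mul2r cnt_gt0 orbT.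
Qed.

Lemma cnt_head_notin y gam w : y \notin w -> cnt (y :: gam) w = 0.
Proof.
elim: w => [|x w IH] //; rewrite inE negb_or => /andP [yx yw].
by rewrite cnt_cons /= (negbTE yx) IH.
Qed.

Lemma repl_head_notin y gam X w : y \notin w -> repl (y :: gam) X w = w.
Proof.
elim: w => [|x w IH] //; rewrite inE negb_or => /andP [yx yw].
by rewrite repl_cons /= (negbTE yx) IH.
Qed.

Section RunsOfOneSymbol.

Variables (y : sym) (t : seq sym).
Hypothesis y_notin_t : y \notin t.

Lemma prefix_nseq_cat j q : 0 < j -> prefix (nseq j y) (nseq q y ++ t) = (j <= q).
Proof.
elim: j q => [|j IH] [|q] //= _.
  move: y_notin_t; case: (t) => [|z t'] //=.
  by rewrite inE negb_or eq_sym => /andP [/negbTE -> _].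
rewrite eqxx /=; case: j IH => [|j] IH; first by case: (nseq q y ++ t).
exact: IH.
Qed.

Lemma cnt_nseq_cat j q : 0 < j -> cnt (nseq j y) (nseq q y ++ t) = q %/ j.
Proof.
case: j => // j _; elim: q {-2}q (leqnn q) => [|n IH] [|q] le_qn.
- by rewrite cnt_head_notin.
- by [].
- by rewrite cnt_head_notin.
have def_yq : y :: nseq q y ++ t = nseq q.+1 y ++ t by [].
rewrite [nseq q.+1 y ++ t]/= cnt_cons def_yq prefix_nseq_cat // andTb.
case: (leqP j.+1 q.+1) => le_jq; last by rewrite IH // !divn_small // (leq_ltn_trans _ le_jq).
have -> : nseq q.+1 y ++ t = nseq j.+1 y ++ (nseq (q.+1 - j.+1) y ++ t).
  by rewrite catA -nseqD subnKC.
rewrite size_nseq drop_size_cat ?size_nseq // IH; last by rewrite subSS; lia.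
have {2}-> : q.+1 = 1 * j.+1 + (q.+1 - j.+1) by rewrite mul1n subnKC.
by rewrite divnMDl.
Qed.

Lemma repl_pair_nseq_cat X q :
  repl [:: y; y] X (nseq q y ++ t) = nseq q./2 (Non X) ++ nseq (odd q) y ++ t.
Proof.
elim: q {-2}q (leqnn q) => [|n IH] [|[|q]] le_qn //=; try by rewrite repl_head_notin.
- by rewrite repl_cons (@prefix_nseq_cat 2 1 isT) andbF repl_head_notin.
- rewrite repl_cons (@prefix_nseq_cat 2 q.+2 isT) /= drop0 IH ?negbK //; lia.
Qed.

End RunsOfOneSymbol.

Lemma cnt_pair gam (y : sym) : 2 <= size gam -> cnt gam [:: y; y] = (gam == [:: y; y]).
Proof.
move=> gam_ge2; case: eqP => [->|ne_gam]; first exact: (@cnt_nseq_cat y [::] _ 2 2 isT).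
case: (posnP (cnt gam [:: y; y])) => // cnt_gt0; case: ne_gam.
have count_le := cnt_gt0_count_le cnt_gt0.
have /all_pred1P def_gam : all (pred1 y) gam.
  apply/allP => s s_gam /=; apply: contraLR s_gam => ne_sy.
  have := count_le s; rewrite /= eq_sym (negbTE ne_sy) /= leqn0.
  by rewrite -has_pred1 has_count => /eqP ->.
have := count_le y; rewrite def_gam count_nseq /= eqxx mul1n.
by case: (size gam) gam_ge2 => [|[|[|n]]].
Qed.

Lemma divn_lt_half q j : 4 <= q -> 3 <= j -> q %/ j < q %/ 2.
Proof. by move=> q_ge4 j_ge3; apply: leq_ltn_trans (leq_div2l q (isT : 0 < 3) j_ge3) _; lia. Qed.

(* [level a X i] is the symbol Y_i above and [stage a m X k] the grammar
   reached after k rounds, the nonterminal X_i being named [X i]. *)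

Definition level (a : nat) (X : nat -> nat) (i : nat) : sym :=
  if i == 0 then Ter a else Non (X i).

Definition level_pair a X i : seq sym := [:: level a X i; level a X i].

Definition bits_tail a m X k : seq sym :=
  [seq level a X i | i <- rev (iota 0 k) & bit m i].

Definition stage_start a m X k : seq sym :=
  nseq (m %/ 2 ^ k) (level a X k) ++ bits_tail a m X k.

Definition stage_rhss a X k : seq (seq sym) :=
  [seq level_pair a X i.-1 | i <- iota 1 k].

Definition stage a m X k : grammar :=
  (0, stage_start a m X k) :: [seq (X i, level_pair a X i.-1) | i <- iota 1 k].

Definition names_ok (X : nat -> nat) k :=
  (forall i, 1 <= i <= k -> X i != 0) /\ {in [pred i | 1 <= i <= k] &, injective X}.

Section Stage.

Variables (a m : nat) (X : nat -> nat) (k : nat).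
Hypothesis okX : names_ok X k.

Lemma level_inj i j : i <= k -> j <= k -> level a X i = level a X j -> i = j.
Proof.
case: okX => _ injX le_ik le_jk; rewrite /level.
case: (i =P 0) => [->|/eqP i0]; case: (j =P 0) => [->|/eqP j0] // [eq_X].
by apply: injX; rewrite // inE /= lt0n ?i0 ?j0.
Qed.

Lemma level_neq i : i < k -> level a X i != level a X k.
Proof.
move=> lt_ik; apply/eqP => /(level_inj (ltnW lt_ik) (leqnn k)) eq_ik.
by rewrite eq_ik ltnn in lt_ik.
Qed.

Lemma mem_bits_tail s : s \in bits_tail a m X k -> exists2 i, i < k & s = level a X i.
Proof.
case/mapP => i; rewrite mem_filter mem_rev mem_iota add0n => /and3P [_ _ lt_ik] ->.
by exists i.
Qed.

Lemma bits_tail_uniq : uniq (bits_tail a m X k).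
Proof.
rewrite map_inj_in_uniq ?filter_uniq ?rev_uniq ?iota_uniq // => i j.
rewrite !mem_filter !mem_rev !mem_iota !add0n => /and3P [_ _ lt_ik] /and3P [_ _ lt_jk].
exact: level_inj (ltnW lt_ik) (ltnW lt_jk).
Qed.

Lemma level_notin_bits_tail : level a X k \notin bits_tail a m X k.
Proof. by apply/negP => /mem_bits_tail [i /level_neq/eqP ne_ik /esym]. Qed.

Lemma count_stage_start_le1 s :
  s != level a X k -> count_mem s (stage_start a m X k) <= 1.
Proof.
move=> ne_s; rewrite count_cat count_nseq /= eq_sym (negbTE ne_s) mul0n add0n.
by rewrite count_uniq_mem ?bits_tail_uniq // leq_b1.
Qed.

Lemma stage_rhss_uniq : uniq (stage_rhss a X k).
Proof.
rewrite map_inj_in_uniq ?iota_uniq // => i j.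
rewrite !mem_iota => /andP [i_ge1 le_ik] /andP [j_ge1 le_jk] [eq_ij _].
suff: i.-1 = j.-1 by lia.
by apply: level_inj eq_ij; lia.
Qed.

Lemma mem_stage_rhss gam :
  gam \in stage_rhss a X k -> exists2 i, i < k & gam = level_pair a X i.
Proof.
case/mapP => i; rewrite mem_iota => /andP [i_ge1 le_ik] ->.
by exists i.-1; first lia.
Qed.

Lemma occ_stage gam : 2 <= size gam ->
  occ (stage a m X k) gam = cnt gam (stage_start a m X k) + (gam \in stage_rhss a X k).
Proof.
move=> gam_ge2; rewrite -count_uniq_mem ?stage_rhss_uniq //.
rewrite /occ /= -map_comp /stage_rhss count_map -sumn_count.
by congr (_ + sumn _); apply: eq_map => i /=; rewrite cnt_pair // eq_sym.
Qed.

(* A string occurring twice either occurs twice in the start rule, so all its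
   symbols are repeated there, or it is some rule's right-hand side Y_i Y_i
   also occurring in the start rule, which forces i = k. *)
Lemma repeated_stage_nseq gam : 2 <= size gam -> 2 <= occ (stage a m X k) gam ->
  gam = nseq (size gam) (level a X k).
Proof.
move=> gam_ge2; rewrite occ_stage //.
case: (leqP 2 (cnt gam (stage_start a m X k))) => [cnt_ge2 _|cnt_lt2 occ_ge2].
  apply/all_pred1P/allP => s s_gam /=; apply: contraT => ne_s.
  have count_gt0 : 0 < count_mem s gam by rewrite -has_count has_pred1.
  have := cnt_mul_count_le gam s (stage_start a m X k).
  have := count_stage_start_le1 ne_s.
  by have := leq_mul cnt_ge2 count_gt0; lia.
have gam_rhs : gam \in stage_rhss a X k by case: (gam \in _) occ_ge2; lia.
have cnt_gt0 : 0 < cnt gam (stage_start a m X k) by rewrite gam_rhs /= in occ_ge2; lia.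
case/mem_stage_rhss: gam_rhs => i lt_ik def_gam.
have := cnt_gt0_count_le cnt_gt0 (level a X i).
have := count_stage_start_le1 (level_neq lt_ik).
by rewrite def_gam /= eqxx; lia.
Qed.

Lemma occ_stage_nseq j : 2 <= j ->
  occ (stage a m X k) (nseq j (level a X k)) = (m %/ 2 ^ k) %/ j.
Proof.
move=> j_ge2; rewrite occ_stage ?size_nseq //.
have -> : nseq j (level a X k) \in stage_rhss a X k = false.
  apply/negP => /mem_stage_rhss [i lt_ik]; case: j j_ge2 => [|[|j]] // _ [eq_ik _].
  by have := level_neq lt_ik; rewrite eq_ik eqxx.
by rewrite addn0 cnt_nseq_cat //; [exact: level_notin_bits_tail | lia].
Qed.

Lemma stage_no_maximal gam : m %/ 2 ^ k < 4 -> ~ maximal (stage a m X k) gam.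
Proof.
move=> q_lt4 [gam_ge2 occ_ge2 _]; move: (occ_ge2).
rewrite (repeated_stage_nseq gam_ge2 occ_ge2) occ_stage_nseq ?size_nseq //.
by have := leq_div2l (m %/ 2 ^ k) (isT : 0 < 2) gam_ge2; lia.
Qed.

Lemma stage_pair_maximal : 4 <= m %/ 2 ^ k -> maximal (stage a m X k) (level_pair a X k).
Proof.
move=> q_ge4; have pairE : level_pair a X k = nseq 2 (level a X k) by [].
split => //; rewrite pairE occ_stage_nseq //; first lia.
move=> gam; rewrite size_nseq => gam_gt2.
case: (ltnP (occ (stage a m X k) gam) 2) => occ_gam; first lia.
rewrite (repeated_stage_nseq _ occ_gam) ?occ_stage_nseq; try lia.
exact: divn_lt_half.
Qed.

Lemma stage_maximal_max_occ gam : 4 <= m %/ 2 ^ k -> maximal (stage a m X k) gam ->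
  occ (stage a m X k) (level_pair a X k) <= occ (stage a m X k) gam ->
  gam = level_pair a X k.
Proof.
move=> q_ge4 [gam_ge2 occ_ge2 _]; rewrite (repeated_stage_nseq gam_ge2 occ_ge2).
rewrite [level_pair _ _ _](_ : _ = nseq 2 (level a X k)) // !occ_stage_nseq //.
case: (ltnP 2 (size gam)) => [gam_gt2|]; first by have := divn_lt_half q_ge4 gam_gt2; lia.
by move=> gam_le2; have -> : size gam = 2 by lia.
Qed.

Lemma stage_rules_of j : 1 <= j <= k ->
  [seq r.2 | r <- stage a m X k & r.1 == X j] = [:: level_pair a X j.-1].
Proof.
case: okX => X_neq0 injX j_range; rewrite /stage /= eq_sym (negbTE (X_neq0 _ j_range)).
rewrite filter_map -map_comp.
have -> : [seq i <- iota 1 k | preim (fun i => (X i, level_pair a X i.-1)) (fun r => r.1 == X j) i]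
          = [seq i <- iota 1 k | pred1 j i].
  apply/eq_in_filter => i; rewrite mem_iota => i_range /=.
  by apply/eqP/eqP => [eq_X|->] //; apply: injX eq_X; rewrite inE; lia.
by rewrite filter_pred1_uniq ?iota_uniq // mem_iota; lia.
Qed.

Lemma expand_stage_level i : i <= k -> expand (stage a m X k) i (level a X i) = nseq (2 ^ i) a.
Proof.
elim: i => [|i IH] // lt_ik.
rewrite {1}/level /= stage_rules_of /= ?IH ?cats0 -?nseqD ?expnS ?mul2n ?addnn //; lia.
Qed.

End Stage.

Definition upd_name (X : nat -> nat) i x := fun j => if j == i then x else X j.

Lemma level_upd a X k x i : i <= k -> level a (upd_name X k.+1 x) i = level a X i.
Proof. by move=> le_ik; rewrite /level /upd_name; have -> : (i == k.+1) = false by lia. Qed.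

Lemma bits_tail_upd a m X k x : bits_tail a m (upd_name X k.+1 x) k = bits_tail a m X k.
Proof.
apply/eq_in_map => i; rewrite mem_filter mem_rev mem_iota => /and3P [_ _ lt_ik].
exact/level_upd/ltnW.
Qed.

Lemma bits_tailS a m X k :
  bits_tail a m X k.+1 = (if bit m k then [:: level a X k] else [::]) ++ bits_tail a m X k.
Proof. by rewrite /bits_tail -addn1 iotaD rev_cat /= add0n; case: (bit m k). Qed.

Lemma repl_stage_start a m X k x : names_ok X k ->
  repl (level_pair a X k) x (stage_start a m X k) = stage_start a m (upd_name X k.+1 x) k.+1.
Proof.
move=> okX; rewrite /stage_start repl_pair_nseq_cat; last exact: level_notin_bits_tail.
rewrite bits_tailS bits_tail_upd (level_upd _ _ _ (leqnn k)) expnSr divnMA divn2.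
by rewrite [level _ _ k.+1]/level /upd_name /= eqxx /bit; case: (odd _).
Qed.

Lemma names_ok_upd X k x : names_ok X k -> x != 0 ->
  (forall i, 1 <= i <= k -> x != X i) -> names_ok (upd_name X k.+1 x) k.+1.
Proof.
move=> [X_neq0 injX] x_neq0 x_fresh; rewrite /upd_name; split.
  by move=> i i_range; case: ifP => // /negbT ne_i; apply: X_neq0; lia.
move=> i j; rewrite !inE => i_range j_range.
case: (i =P k.+1) => [->|ne_i]; case: (j =P k.+1) => [->|ne_j] // eq_x.
- by move: (x_fresh j); rewrite eq_x eqxx; lia.
- by move: (x_fresh i); rewrite -eq_x eqxx; lia.
- by apply: injX; rewrite // inE; lia.
Qed.

Lemma repair_step_stage a m X k g : names_ok X k -> 4 <= m %/ 2 ^ k ->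
  repair_step (stage a m X k) g ->
  exists x, names_ok (upd_name X k.+1 x) k.+1 /\ g = stage a m (upd_name X k.+1 x) k.+1.
Proof.
move=> okX q_ge4 [gam [x [gam_max gam_best x_neq0 x_fresh ->]]].
have -> := stage_maximal_max_occ okX q_ge4 gam_max (gam_best _ (stage_pair_maximal a okX q_ge4)).
exists x; split.
  apply: names_ok_upd => // i i_range; apply: contra x_fresh => /eqP ->.
  by rewrite /= -map_comp inE; apply/orP; right; apply/map_f; rewrite mem_iota; lia.
rewrite /stage; have -> : iota 1 k.+1 = iota 1 k ++ [:: k.+1].
  by rewrite -(addn1 k) iotaD add1n addn1.
rewrite map_cat /= repl_stage_start // -map_comp.
congr (_ :: _ ++ [:: (_, _)]); last 2 first.
- by rewrite /upd_name eqxx.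
- by rewrite /level_pair level_upd.
apply/eq_in_map => i; rewrite mem_iota => i_range /=.
rewrite /upd_name ifN; last lia.
rewrite /level_pair level_upd; last lia.
rewrite repl_head_notin // !inE negb_or eq_sym.
by have := level_neq a okX (_ : i.-1 < k); rewrite andbb; apply; lia.
Qed.

Lemma quot_ge4_before_last m k : 4 <= m -> k < (trunc_log 2 m).-1 -> 4 <= m %/ 2 ^ k.
Proof.
move=> m_ge4 lt_kL; rewrite leq_divRL ?expn_gt0 //.
have le_pow : 2 ^ k.+2 <= 2 ^ trunc_log 2 m by apply: leq_pexp2l; lia.
apply: leq_trans (trunc_logP (isT : 1 < 2) _) => //; last lia.
by apply: leq_trans le_pow; rewrite !expnS mulnA mulnC.
Qed.

Lemma quot_last m : 4 <= m -> 2 <= m %/ 2 ^ (trunc_log 2 m).-1 < 4.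
Proof.
move=> m_ge4; have L_ge2 : 2 <= trunc_log 2 m by apply: trunc_log_max.
have lo : 2 ^ trunc_log 2 m <= m by apply: trunc_logP; lia.
have hi := @trunc_log_ltn 2 m isT.
have defL : trunc_log 2 m = (trunc_log 2 m).-1.+1 by lia.
rewrite defL in lo hi; rewrite leq_divRL ?ltn_divLR ?expn_gt0 //.
by move: lo hi; rewrite !expnS mulnA => -> ->.
Qed.

Lemma repair_reach_stage a m g g' : 4 <= m -> repair_reach g g' ->
  forall X k, g = stage a m X k -> names_ok X k -> k <= (trunc_log 2 m).-1 ->
  ~ (exists gam, maximal g' gam) ->
  exists X', names_ok X' (trunc_log 2 m).-1 /\ g' = stage a m X' (trunc_log 2 m).-1.
Proof.
move=> m_ge4; elim => [g0|g0 g1 g2 g01 _ IH] X k def_g0 okX le_kL no_max; subst g0.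
  case: (ltnP k (trunc_log 2 m).-1) => [lt_kL|ge_kL].
    by case: no_max; exists (level_pair a X k); apply: stage_pair_maximal => //; apply: quot_ge4_before_last.
  by exists X; have <- : k = (trunc_log 2 m).-1 by lia.
case: (ltnP k (trunc_log 2 m).-1) => [lt_kL|ge_kL].
  have [x [okX' def_g1]] := repair_step_stage okX (quot_ge4_before_last m_ge4 lt_kL) g01.
  by apply: IH def_g1 okX' _ no_max.
case: g01 => gam [_ [gam_max _ _ _ _]]; case: (stage_no_maximal okX _ gam_max).
have -> : k = (trunc_log 2 m).-1 by lia.
by have := quot_last m_ge4; lia.
Qed.

Lemma flatten_fbit a m X s :
  flatten [seq fbit a X i (bit m i) | i <- s] = [seq level a X i | i <- s & bit m i].
Proof. by elim: s => //= i s ->; rewrite /fbit /level; case: (bit m i) => //=; case: (i == 0). Qed.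

Lemma stage_last a m X : 4 <= m -> stage a m X (trunc_log 2 m).-1 = expected_grammar a m X.
Proof.
move=> m_ge4; have := quot_last m_ge4; have : 2 <= trunc_log 2 m by apply: trunc_log_max.
rewrite /expected_grammar /start_rhs flatten_fbit.
case: (trunc_log 2 m) => [|[|n]] //= _ q_range; rewrite /stage /= !subSS subn0.
congr ((_, _) :: _ :: _).
  rewrite -[[seq _ | _ <- _ & _]]/(bits_tail a m X n.+2) bits_tailS /stage_start /bit.
  by case: (m %/ 2 ^ n.+1) q_range => [|[|[|[|q]]]].
by apply/eq_in_map => i; rewrite mem_iota => i_range; rewrite /level_pair /level ifN //; lia.
Qed.

Unset Implicit Arguments.

Theorem mainTheorem2 (m a : nat) (g : grammar) :
  4 <= m -> repair_output (nseq m a) g ->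
  exists X : nat -> nat,
    [/\ (forall i, 1 <= i <= (trunc_log 2 m).-1 -> X i != 0),
        {in [pred i | 1 <= i <= (trunc_log 2 m).-1] &, injective X},
        perm_eq g (expected_grammar a m X) &
        (forall i, 1 <= i <= (trunc_log 2 m).-1 ->
           expand g i (Non (X i)) = nseq (2 ^ i) a)].
Proof.
move=> m_ge4 [reach_g no_max].
have start : [:: (0, map Ter (nseq m a))] = stage a m (fun=> 0) 0.
  by rewrite /stage /stage_start /bits_tail /= expn0 divn1 map_nseq cats0.
have ok0 : names_ok (fun=> 0) 0 by split => [i|i j]; rewrite ?inE; lia.
have [X [okX ->]] := repair_reach_stage m_ge4 reach_g start ok0 (leq0n _) no_max.
have [X_neq0 injX] := okX.
exists X; split => //; first by rewrite stage_last.
move=> i i_range; have := expand_stage_level a m okX (_ : i <= (trunc_log 2 m).-1).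
by rewrite /level ifN; [apply; lia | lia].
Qed.
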